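(* Let $G$ be a group acting on a set $X$, let $Y$ be a finite subset of $X$ and set \[\mu=\inf_{A\in\mathcal{P}_{\mathrm{fin}}(G)\setminus\{\emptyset\}}\frac{|A\cdot Y|}{|A|}.\] Then either $\mu=0$, or for every $\lambda\in[0,\mu]$ there exists a finite subgroup $H$ of $G$ containing $G_Y$ such that, writing $c_Y(A)=|A\cdot Y|-\lambda|A|$, \[c_Y(A)\geq c_Y(H)\geq|Y|-\lambda|H|\] for every nonempty finite subset $A$ of $G$.
   Context: $\mathcal{P}_{\mathrm{fin}}(G)$ is the set of finite subsets of $G$; $A\cdot Y=\{a\cdot y\mid a\in A,y\in Y\}$; $G_Y=\{g\in G\mid g\cdot Y=Y\}$ is the stabilizer of $Y$. *)

From HB Require Import structures.
From mathcomp Require Import all_boot all_order all_algebra.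
From mathcomp Require Import finmap.
From mathcomp Require Import all_classical all_reals.
Set Implicit Arguments.
Unset Strict Implicit.
Unset Printing Implicit Defensive.
Import Order.TTheory GRing.Theory Num.Theory.
Local Open Scope fset_scope.

Section Defs.
Variables (G : groupType) (X : choiceType).

Definition is_action (act : G -> X -> X) : Prop :=
  (forall x, act 1%g x = x) /\
  (forall g h x, act (g * h)%g x = act g (act h x)).

Definition actset (act : G -> X -> X) (A : {fset G}) (Y : {fset X}) : {fset X} :=
  [fset act a y | a in A, y in Y].

Definition in_stab (act : G -> X -> X) (Y : {fset X}) (g : G) : Prop :=
  actset act [fset g] Y = Y.

Definition is_subgroup (H : {fset G}) : Prop :=
  (1%g \in H) /\
  (forall g h, g \in H -> h \in H -> (g * h)%g \in H) /\
  (forall g, g \in H -> (g^-1)%g \in H).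

Definition mu (R : realType) (act : G -> X -> X) (Y : {fset X}) : R :=
  inf [set r : R | exists A : {fset G},
        A != fset0 /\ r = (#|` actset act A Y|%:R / #|` A|%:R)%R].

Definition cY (R : realType) (act : G -> X -> X) (Y : {fset X}) (lam : R)
  (A : {fset G}) : R :=
  (#|` actset act A Y|%:R - lam * #|` A|%:R)%R.

End Defs.

From HB Require Import structures.
From mathcomp Require Import all_boot all_order all_algebra.
From mathcomp Require Import finmap.
From mathcomp Require Import all_classical all_reals.
From mathcomp Require Import lra.
Set Implicit Arguments.
Unset Strict Implicit.
Unset Printing Implicit Defensive.
Import Order.TTheory GRing.Theory Num.Theory.
Local Open Scope fset_scope.
Local Open Scope ring_scope.

(* For [lam < mu] the cost satisfies [c_lam(A) >= (mu - lam) |A|], so it takes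
   finitely many values below [c_lam({1})] and attains its minimum.  As
   [A |-> |A.Y|] is submodular and [c_lam] is invariant under left translation,
   a minimizer of least size containing 1 is a subgroup [H_lam]; for [lam > 0] it
   contains [G_Y], and [H_lam] increases with [lam].  The case [lam = 0] follows
   from a small positive [lam], for which [|H.Y| < |Y| + 1].  For [lam = mu] take
   [lam_n] increasing to [mu].  The chain [H_n] stabilizes: otherwise the
   orbit-stabilizer formula gives [|H_n.Y| = |H_n| beta + p_n], where [beta] sums
   [1/|stabilizer|] over the orbits whose stabilizers stay bounded and
   [p_n = o(|H_n|)]; this forces [beta = mu], so that [c_mu(H_n) = p_n] would be a natural number
   decreasing strictly at every change of [H_n].  The stable subgroup minimizes
   [c_mu] in the limit. *)

Lemma fset1_neq0 (T : choiceType) (x : T) : [fset x] != fset0.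
Proof. by rewrite -cardfs_gt0 cardfs1. Qed.

Lemma eventually_const_of_potential (T : eqType) (u : nat -> T) (p : nat -> nat) N0 :
  (forall m n, (N0 <= m <= n)%N -> u m != u n -> (p n < p m)%N) ->
  exists N, forall n, (N <= n)%N -> u n = u N.
Proof.
move=> p_lt.
have : exists k, `[< exists2 n, (N0 <= n)%N & p n = k >] by exists (p N0); apply/asboolP; exists N0.
case/ex_minnP => _ /asboolP[N N0N <-] p_min.
exists N => n Nn; apply/eqP; rewrite eq_sym; apply: contraT => uNn.
have : (p N <= p n)%N by apply: p_min; apply/asboolP; exists n => //; apply: leq_trans Nn.
by rewrite leqNgt p_lt ?N0N.
Qed.

Lemma nondecreasing_nat_dichotomy (u : nat -> nat) : {homo u : m n / (m <= n)%N} ->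
  (exists m, \forall n \near eventually, u n = m) \/
  (forall M, \forall n \near eventually, (M < u n)%N).
Proof.
move=> u_nd; have [[M uM]|] := pselect (exists M, forall n, (u n <= M)%N).
  left; have [|N uN] := @eventually_const_of_potential _ u (fun n => M - u n)%N 0.
    move=> m n /andP[_ mn] umn.
    have lt_umn : (u m < u n)%N by rewrite ltn_neqAle umn u_nd.
    by rewrite ltn_sub2l // (leq_trans lt_umn).
  by exists (u N), N.
move=> /forallNP u_unb; right => M.
have [N MN] : exists N, (M < u N)%N.
  by have /existsNP[N /negP] := u_unb M; rewrite -ltnNge; exists N.
by exists N => // n Nn; apply: leq_trans MN (u_nd _ _ Nn).
Qed.

Lemma exists_min_finite_factor (T : Type) (I : finType) d (R : orderType d)
    (P : T -> Prop) (k : T -> I) (F : I -> R) :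
  (exists t, P t) -> exists2 t, P t & forall t', P t' -> (F (k t) <= F (k t'))%O.
Proof.
case=> t0 Pt0; pose Q i := `[< exists2 t, P t & k t = i >].
have Qk0 : Q (k t0) by apply/asboolP; exists t0.
case: (arg_minP F Qk0) => _ /asboolP[t Pt <-] F_min.
by exists t => // t' Pt'; apply: F_min; apply/asboolP; exists t'.
Qed.

Lemma near_forall_fset (T : Type) (F : set_system T) (I : choiceType) (D : {fset I})
    (P : I -> T -> Prop) : Filter F ->
  (forall i, i \in D -> \forall x \near F, P i x) -> \forall x \near F, forall i, i \in D -> P i x.
Proof. by move=> FF DP; apply: filterS (filter_bigI FF DP) => x + i iD; apply. Qed.

Section Action.
Variables (G : groupType) (X : choiceType) (act : G -> X -> X).
Hypothesis Hact : is_action act.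

Lemma act1 x : act 1%g x = x. Proof. by case: Hact. Qed.

Lemma actM g h x : act (g * h)%g x = act g (act h x). Proof. by case: Hact. Qed.

Lemma actK g : cancel (act g) (act g^-1%g).
Proof. by move=> x; rewrite -actM mulVg act1. Qed.

Lemma act_inj g : injective (act g). Proof. exact: can_inj (actK g). Qed.

Definition ltrans (g : G) (A : {fset G}) : {fset G} := [fset (g * a)%g | a in A].
Definition rtrans (A : {fset G}) (g : G) : {fset G} := [fset (a * g)%g | a in A].

Lemma card_ltrans g A : #|` ltrans g A| = #|` A|.
Proof. by rewrite card_imfset //; apply: mulgI. Qed.

Lemma mem_ltrans g a A : a \in A -> (g * a)%g \in ltrans g A.
Proof. exact: in_imfset. Qed.

Lemma ltrans_nonempty g A : A != fset0 -> ltrans g A != fset0.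
Proof. by rewrite -!cardfs_gt0 card_ltrans. Qed.

Lemma one_in_ltransV a A : a \in A -> 1%g \in ltrans a^-1 A.
Proof. by move=> aA; rewrite -(mulVg a) mem_ltrans. Qed.

Variable Y : {fset X}.

Lemma actsetP A x :
  reflect (exists2 a, a \in A & exists2 y, y \in Y & x = act a y) (x \in actset act A Y).
Proof. exact: imfset2P. Qed.

Lemma mem_actset A a y : a \in A -> y \in Y -> act a y \in actset act A Y.
Proof. by move=> aA yY; apply/actsetP; exists a => //; exists y. Qed.

Lemma actsetS A B : A `<=` B -> actset act A Y `<=` actset act B Y.
Proof.
move=> /fsubsetP AB; apply/fsubsetP => _ /actsetP[a aA [y yY ->]].
by rewrite mem_actset ?AB.
Qed.

Lemma actsetU A B : actset act (A `|` B) Y = actset act A Y `|` actset act B Y.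
Proof.
apply/fsetP => x; rewrite in_fsetU; apply/actsetP/orP.
  by case=> a; rewrite in_fsetU => /orP[] aA [y yY ->]; [left|right]; apply: mem_actset.
by case=> /actsetP[a aA [y yY ->]]; exists a; rewrite ?in_fsetU ?aA ?orbT //; exists y.
Qed.

Lemma card_actsetUI A B :
  (#|` actset act (A `|` B) Y| + #|` actset act (A `&` B) Y|
    <= #|` actset act A Y| + #|` actset act B Y|)%N.
Proof.
rewrite actsetU -(cardfsUI (actset act A Y)) leq_add2l.
by apply/fsubset_leq_card; rewrite fsubsetI !actsetS ?fsubsetIl ?fsubsetIr.
Qed.

Lemma actset_ltrans g A : actset act (ltrans g A) Y = [fset act g x | x in actset act A Y].
Proof.
apply/fsetP => x; apply/actsetP/imfsetP.
  move=> [_ /imfsetP[a aA ->] [y yY ->]].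
  by exists (act a y); rewrite ?mem_actset ?actM.
move=> [_ /actsetP[a aA [y yY ->]] ->].
by exists (g * a)%g; rewrite ?mem_ltrans //; exists y; rewrite ?actM.
Qed.

Lemma card_actset_ltrans g A : #|` actset act (ltrans g A) Y| = #|` actset act A Y|.
Proof. by rewrite actset_ltrans card_imfset //; apply: act_inj. Qed.

Lemma actset_rtrans_stab A g : in_stab act Y g -> actset act (rtrans A g) Y = actset act A Y.
Proof.
rewrite /in_stab => gY; apply/fsetP => x; apply/actsetP/actsetP.
  move=> [_ /imfsetP[a aA ->] [y yY ->]]; exists a => //; exists (act g y).
    by rewrite -gY mem_actset ?in_fset1.
  by rewrite actM.
move=> [a aA [y]]; rewrite -{1}gY => /actsetP[g' + [y' y'Y ->]] ->.
rewrite in_fset1 => /eqP ->.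
by exists (a * g)%g; [apply: in_imfset | exists y'; rewrite ?actM].
Qed.

Lemma actset1 : actset act [fset 1%g] Y = Y.
Proof.
apply/fsetP => x; apply/actsetP/idP => [[_ /fset1P-> [y yY ->]]|xY].
  by rewrite act1.
by exists 1%g; rewrite ?fset11 //; exists x; rewrite ?act1.
Qed.

Lemma card_actset_ge A : 1%g \in A -> (#|` Y| <= #|` actset act A Y|)%N.
Proof.
move=> A1; apply/fsubset_leq_card/fsubsetP => y yY.
by rewrite -(act1 y) mem_actset.
Qed.

Lemma card_actset_ge_nonempty A : A != fset0 -> (#|` Y| <= #|` actset act A Y|)%N.
Proof.
case/fset0Pn => a aA; rewrite -(card_actset_ltrans a^-1).
by rewrite card_actset_ge ?one_in_ltransV.
Qed.

End Action.

Section Orbits.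
Variables (G : groupType) (X : choiceType) (act : G -> X -> X).
Hypothesis Hact : is_action act.
Variable H : {fset G}.
Hypothesis subH : is_subgroup H.

Definition actorbit (x : X) : {fset X} := [fset act h x | h in H].
Definition actstab (x : X) : {fset G} := [fset h in H | act h x == x].

Let H1 : 1%g \in H. Proof. by case: subH. Qed.
Let HM g h : g \in H -> h \in H -> (g * h)%g \in H. Proof. by case: subH => _ [+ _]; apply. Qed.
Let HV g : g \in H -> g^-1%g \in H. Proof. by case: subH => _ [_]; apply. Qed.

Lemma mem_actorbit h x : h \in H -> act h x \in actorbit x.
Proof. exact: in_imfset. Qed.

Lemma actorbit_refl x : x \in actorbit x.
Proof. by rewrite -{1}(act1 Hact x) mem_actorbit. Qed.

Lemma actorbit_eq x y : y \in actorbit x -> actorbit y = actorbit x.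
Proof.
case/imfsetP=> h hH ->; apply/fsetP => z; apply/imfsetP/imfsetP => -[g gH ->].
  by exists (g * h)%g; rewrite ?HM ?(actM Hact).
by exists (g * h^-1)%g; rewrite ?HM ?HV // (actM Hact) (actK Hact).
Qed.

Lemma actorbit_sym x y : y \in actorbit x -> x \in actorbit y.
Proof. by move/actorbit_eq ->; apply: actorbit_refl. Qed.

Lemma card_actstab_gt0 x : (0 < #|` actstab x|)%N.
Proof.
by rewrite cardfs_gt0; apply/fset0Pn; exists 1%g; rewrite !inE /= (act1 Hact) eqxx andbT.
Qed.

Lemma orbit_stabilizer x : (#|` actorbit x| * #|` actstab x|)%N = #|` H|.
Proof.
rewrite (card_fset_sum1 H) (partition_big_imfset _ (fun h => act h x)) /=.
rewrite (card_fset_sum1 (actorbit x)) big_distrl /=.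
apply: eq_big_seq => _ /imfsetP[g gH ->]; rewrite mul1n big_fset_condE -card_fset_sum1.
have -> : [fset h in H | act h x == act g x] = ltrans g (actstab x).
  apply/fsetP => h; rewrite !inE /=; apply/andP/imfsetP.
    case=> hH /eqP hx; exists (g^-1 * h)%g; last by rewrite mulVKg.
    by rewrite !inE /= HM ?HV //= (actM Hact) hx (actK Hact).
  case=> k; rewrite !inE /= => /andP[kH /eqP kx] ->.
  by rewrite HM // (actM Hact) kx.
by rewrite card_ltrans.
Qed.

Lemma actset_fsetU1 x T : actset act H (x |` T) = actorbit x `|` actset act H T.
Proof.
apply/fsetP => z; rewrite in_fsetU; apply/imfset2P/orP.
  case=> h hH [y]; rewrite in_fset1U => /orP[/eqP->|yT] ->; first by left; apply: mem_actorbit.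
  by right; apply: in_imfset2.
case=> [/imfsetP[h hH ->]|/imfset2P[h hH [y yT ->]]]; exists h => //.
  by exists x; rewrite ?fset1U1.
by exists y; rewrite ?fset1Ur.
Qed.

Lemma card_actset_orbits (T : {fset X}) :
  {in T &, forall t t', t' \in actorbit t -> t = t'} ->
  #|` actset act H T| = (\sum_(t <- T) #|` actorbit t|)%N.
Proof.
move: {2}#|` T| (erefl #|` T|) => n; elim: n T => [|n IH] T cardT distT.
  move/eqP: cardT; rewrite cardfs_eq0 => /eqP->; rewrite big_seq_fset0.
  by apply/eqP; rewrite cardfs_eq0 -fsubset0; apply/fsubsetP => z /imfset2P[h _ [y]].
have [t tT] : exists t, t \in T by apply/fset0Pn; rewrite -cardfs_gt0 cardT.
rewrite -(fsetD1K tT) actset_fsetU1 big_fsetU1 ?fsetD11 //=.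
have distT' : {in T `\ t &, forall u u', u' \in actorbit u -> u = u'}.
  by move=> u u' /fsetD1P[_ uT] /fsetD1P[_ u'T]; apply: distT.
rewrite -IH //; last by move: cardT; rewrite (cardfsD1 t) tT add1n => -[].
rewrite -cardfsUI; apply/eqP; rewrite -[X in X == _]addn0 eqn_add2l eq_sym cardfs_eq0.
rewrite -fsubset0; apply/fsubsetP => z; rewrite in_fsetI => /andP[zt /imfset2P[h hH [u uT' zu]]].
have /fsetD1P[ut uT] := uT'.
have tu : t \in actorbit u.
  by apply: actorbit_sym; rewrite -(actorbit_eq zt); apply: actorbit_sym; rewrite zu mem_actorbit.
by move: ut; rewrite (distT u t uT tT tu) eqxx.
Qed.

Section MinimalCover.
Variables (T Y : {fset X}).
Hypotheses (TY : T `<=` Y) (YHT : Y `<=` actset act H T).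
Hypothesis minT : forall T', T' `<=` T -> Y `<=` actset act H T' -> (#|` T| <= #|` T'|)%N.

Lemma mincover_orbits_disjoint : {in T &, forall t t', t' \in actorbit t -> t = t'}.
Proof.
move=> t t' tT t'T /imfsetP[g gH t'E]; apply/eqP; apply: contraT => tt'.
suff /minT : Y `<=` actset act H (T `\ t').
  by rewrite fsubsetDl (cardfsD1 t') t'T ltnn; apply.
apply/fsubsetP => y /(fsubsetP YHT) /imfset2P[h hH [u uT ->]].
have [->|ut'] := eqVneq u t'; last by apply: in_imfset2; rewrite // in_fsetD1 ut'.
have -> : act h t' = act (h * g)%g t by rewrite (actM Hact) -t'E.
by apply: in_imfset2; rewrite ?HM // in_fsetD1 tt'.
Qed.

Lemma card_actset_mincover : #|` actset act H Y| = (\sum_(t <- T) #|` actorbit t|)%N.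
Proof.
rewrite -card_actset_orbits; last exact: mincover_orbits_disjoint.
congr #|` _|; apply/fsetP => x; apply/idP/idP.
  move=> /imfset2P[h hH [y /(fsubsetP YHT) /imfset2P[g gH [t tT ->]] ->]].
  by rewrite -(actM Hact); apply: in_imfset2; rewrite ?HM.
by move=> /imfset2P[h hH [t tT ->]]; apply: in_imfset2; rewrite // (fsubsetP TY).
Qed.

End MinimalCover.

End Orbits.

Lemma actstabS (G : groupType) (X : choiceType) (act : G -> X -> X) (H K : {fset G}) x :
  H `<=` K -> actstab act H x `<=` actstab act K x.
Proof.
move=> /fsubsetP HK; apply/fsubsetP => h; rewrite !inE /= => /andP[hH ->].
by rewrite HK.
Qed.

Section Cost.
Variables (G : groupType) (X : choiceType) (act : G -> X -> X).
Hypothesis Hact : is_action act.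
Variables (Y : {fset X}) (R : realType).

Local Notation mu := (mu R act Y).
Local Notation c := (cY act Y).
Implicit Types (lam : R) (A B H K : {fset G}).

Lemma mu_ge0 : 0 <= mu.
Proof.
apply: lb_le_inf => [|_ [A [_ ->]]]; last by rewrite divr_ge0.
pose one := [fset (1%g : G)].
by exists (#|` actset act one Y|%:R / #|` one|%:R), one; rewrite fset1_neq0.
Qed.

Lemma mu_le A : A != fset0 -> mu * #|` A|%:R <= #|` actset act A Y|%:R.
Proof.
move=> A0; rewrite -ler_pdivlMr ?ltr0n ?cardfs_gt0 //.
by apply: ge_inf; [exists 0 => _ [B [_ ->]]; rewrite divr_ge0 | exists A].
Qed.

Lemma cY_ge lam A : A != fset0 -> (mu - lam) * #|` A|%:R <= c lam A.
Proof. by move/mu_le; rewrite /cY mulrBl lerD2r. Qed.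

Lemma cY_ltrans lam g A : c lam (ltrans g A) = c lam A.
Proof. by rewrite /cY card_actset_ltrans ?card_ltrans. Qed.

Lemma cY_submod lam lam' A B :
  c lam (A `&` B) + c lam' (A `|` B)
    <= c lam A + c lam' B - (lam' - lam) * (#|` A|%:R - #|` A `&` B|%:R).
Proof.
have := card_actsetUI act Y A B; rewrite -(ler_nat R) !natrD /cY.
have /(congr1 (fun n => n%:R : R)) := cardfsUI A B; rewrite !natrD.
set a := #|` A|%:R; set b := #|` B|%:R; set u := #|` A `|` B|%:R; set i := #|` A `&` B|%:R.
move=> e; have -> : u = a + b - i by rewrite -e addrK.
rewrite !mulrBr !mulrDr; lra.
Qed.

Definition minimizer lam H := H != fset0 /\ forall A, A != fset0 -> c lam H <= c lam A.

Lemma minimizer_ltrans lam g H : minimizer lam H -> minimizer lam (ltrans g H).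
Proof. by case=> H0 H_min; split=> [|A /H_min]; rewrite ?ltrans_nonempty ?cY_ltrans. Qed.

Lemma exists_minimizer lam : 0 <= lam < mu -> exists H, minimizer lam H.
Proof.
case/andP=> lam_ge0 lam_lt; have mu_lam_gt0 : 0 < mu - lam by rewrite subr_gt0.
pose c1 := c lam [fset (1%g : G)].
(* Every [A] with [c lam A <= c1] has [|A|] and [|A.Y|] at most [b], so [c lam]
   takes finitely many values on such sets. *)
pose b := (1 + mu) * c1 / (mu - lam); pose K := Num.Def.archi_bound b.
pose P A := A != fset0 /\ c lam A <= c1.
have c1_ge0 : 0 <= c1.
  by apply: le_trans (cY_ge _ (fset1_neq0 _)); rewrite cardfs1 mulr1 ltW.
have bd : b * (mu - lam) = (1 + mu) * c1 by rewrite divfK ?gt_eqF.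
have b_ge0 : 0 <= b by rewrite -(pmulr_lge0 _ mu_lam_gt0) bd mulr_ge0 // addr_ge0 ?mu_ge0.
have P_bound A : P A -> (#|` A| <= K)%N /\ (#|` actset act A Y| <= K)%N.
  case=> A0 cA; have := cY_ge lam A0; move: cA; rewrite /cY -!(ler_nat R).
  have /ltW Kb := archi_boundP b_ge0; have := mu_ge0.
  set n := #|` A|%:R; set a := #|` actset act A Y|%:R => mu_ge0 cA cA'.
  have n_ge0 : 0 <= n by rewrite ler0n.
  split; apply: le_trans Kb; rewrite -(ler_pM2r mu_lam_gt0) bd; nra.
pose k A : 'I_K.+1 * 'I_K.+1 := (inord #|` A|, inord #|` actset act A Y|).
pose F (ij : 'I_K.+1 * 'I_K.+1) := (ij.2 : nat)%:R - lam * (ij.1 : nat)%:R.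
have cF A : P A -> c lam A = F (k A).
  by case/P_bound => An AYn; rewrite /F /= !inordK.
have [|H PH H_min] := exists_min_finite_factor k F (P := P).
  by exists [fset 1%g]; split; rewrite ?fset1_neq0.
exists H; split => [|A A0]; first by case: PH.
have [cA|/ltW] := leP (c lam A) c1; last by apply: le_trans; case: PH.
by rewrite !cF //; apply: H_min.
Qed.

Lemma minimizer_cY_mu_lt lam H K : lam < mu -> minimizer lam K -> H != fset0 ->
  (#|` H| < #|` K|)%N -> c mu K < c mu H.
Proof.
move=> lam_lt [_ K_min] H0 HK; have := K_min _ H0; rewrite /cY.
have : lam * (#|` K|%:R - #|` H|%:R) < mu * (#|` K|%:R - #|` H|%:R).
  by rewrite ltr_pM2r // subr_gt0 ltr_nat.
lra.
Qed.

Definition small_minimizer lam H :=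
  [/\ minimizer lam H, 1%g \in H & forall K, minimizer lam K -> (#|` H| <= #|` K|)%N].

Lemma exists_small_minimizer lam :
  (exists H, minimizer lam H) -> exists H, small_minimizer lam H.
Proof.
move=> exH; have : exists n, `[< exists2 H, minimizer lam H & #|` H| = n >].
  by case: exH => H HM; exists #|` H|; apply/asboolP; exists H.
case/ex_minnP => _ /asboolP[H HM <-] H_small.
have [/fset0Pn[a aH] _] := HM.
exists (ltrans a^-1 H); split; [exact: minimizer_ltrans | exact: one_in_ltransV |].
by move=> K KM; rewrite card_ltrans; apply: H_small; apply/asboolP; exists K.
Qed.

Lemma small_minimizer_ltransV lam H a : small_minimizer lam H -> a \in H ->
  ltrans a^-1 H = H.
Proof.
case=> HM H1 H_small aH; set K := ltrans a^-1 H.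
have [[H0 H_min] [K0 K_min]] := (HM, minimizer_ltrans a^-1 HM).
have HK0 : H `&` K != fset0 by apply/fset0Pn; exists 1%g; rewrite in_fsetI H1 one_in_ltransV.
have HUK0 : H `|` K != fset0 by rewrite fsetU_eq0 negb_and H0.
(* By submodularity [H :&: a^-1 H] is again a minimizer; it contains 1, so it
   cannot be smaller than [H]. *)
have HKM : minimizer lam (H `&` K).
  split=> // A /H_min; apply: le_trans.
  have := cY_submod lam lam H K; have := H_min _ HUK0.
  rewrite /K cY_ltrans subrr mul0r subr0; lra.
have /eqP HK : H `&` K == H by rewrite eqEfcard fsubsetIl H_small.
apply/eqP; rewrite eq_sym eqEfcard card_ltrans leqnn andbT.
by rewrite -HK fsubsetIr.
Qed.

Lemma small_minimizer_subgroup lam H : small_minimizer lam H -> is_subgroup H.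
Proof.
move=> HS; have [_ H1 _] := HS; split=> //; split=> [g h gH hH|g gH].
  by move: hH; rewrite -{1}(small_minimizer_ltransV HS gH) => /imfsetP[x xH ->]; rewrite mulVKg.
by rewrite -(small_minimizer_ltransV HS gH); apply/imfsetP; exists 1%g; rewrite ?mulg1.
Qed.

Lemma minimizer_stab lam H g : 0 < lam -> minimizer lam H -> 1%g \in H ->
  in_stab act Y g -> g \in H.
Proof.
move=> lam_gt0 [H0 H_min] H1 gY; apply: contraT => gH.
(* [H :|: H g] has the same image as [H] but more elements. *)
have lt_card : (#|` H| < #|` H `|` rtrans H g|)%N.
  apply: fproper_ltn_card; rewrite fproperEneq fsubsetUl andbT.
  apply: contraNneq gH => ->; rewrite in_fsetU; apply/orP; right.
  by apply/imfsetP; exists 1%g; rewrite ?mul1g.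
have /H_min : H `|` rtrans H g != fset0 by rewrite fsetU_eq0 negb_and H0.
rewrite /cY actsetU actset_rtrans_stab // fsetUid lerD2l lerN2 ler_pM2l // ler_nat.
by rewrite leqNgt lt_card.
Qed.

Lemma minimizer_nested lam lam' H K : lam < lam' ->
  minimizer lam H -> minimizer lam' K -> H `&` K != fset0 -> H `<=` K.
Proof.
move=> lam_lt [H0 H_min] [K0 K_min] HK0.
have /K_min : H `|` K != fset0 by rewrite fsetU_eq0 negb_and H0.
have := cY_submod lam lam' H K; have := H_min _ HK0 => le1 le2 le3.
have : (#|` H|%:R - #|` H `&` K|%:R) * (lam' - lam) <= 0 by rewrite mulrC; lra.
rewrite pmulr_lle0 ?subr_gt0 // subr_le0 ler_nat => HKH.
have /eqP <- : H `&` K == H by rewrite eqEfcard fsubsetIl.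
exact: fsubsetIr.
Qed.

Definition min_subgroup lam : {fset G} := xget fset0 (small_minimizer lam).

Lemma min_subgroupP lam : 0 <= lam < mu -> small_minimizer lam (min_subgroup lam).
Proof.
by move=> lam_ok; apply: xgetPex; apply: exists_small_minimizer; apply: exists_minimizer.
Qed.

Definition optimal_subgroup lam H :=
  [/\ is_subgroup H, forall g, in_stab act Y g -> g \in H & minimizer lam H].

Lemma min_subgroup_optimal lam :
  0 < lam < mu -> optimal_subgroup lam (min_subgroup lam).
Proof.
case/andP=> lam_gt0 lam_lt; have /min_subgroupP HS : 0 <= lam < mu by rewrite ltW.
have [HM H1 _] := HS; split=> //; first exact: small_minimizer_subgroup HS.
by move=> g; apply: minimizer_stab lam_gt0 HM H1.
Qed.

Lemma min_subgroup_mono lam lam' :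
  0 <= lam -> lam <= lam' < mu -> min_subgroup lam `<=` min_subgroup lam'.
Proof.
move=> lam_ge0 /andP[lam_le lam'_lt].
have [<-|lam_neq] := eqVneq lam lam'; first exact: fsubset_refl.
have [HM H1 _] : small_minimizer lam (min_subgroup lam).
  by apply: min_subgroupP; rewrite lam_ge0 (le_lt_trans lam_le).
have [KM K1 _] : small_minimizer lam' (min_subgroup lam').
  by apply: min_subgroupP; rewrite (le_trans lam_ge0).
apply: minimizer_nested HM KM _; first by rewrite lt_neqAle lam_neq.
by apply/fset0Pn; exists 1%g; rewrite in_fsetI H1.
Qed.

Lemma exists_optimal_subgroup0 : 0 < mu -> exists H, optimal_subgroup 0 H.
Proof.
move=> mu_gt0; set k : R := #|` Y|%:R; have k_ge0 : 0 <= k by rewrite ler0n.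
(* For this [lam], [c lam H <= c lam [fset 1]] forces [|H.Y| < |Y| + 1]. *)
set lam := mu / (2 * k + 2).
have mu_lam : mu = lam * (2 * k + 2) by rewrite /lam divfK // gt_eqF //; lra.
have lam_gt0 : 0 < lam by rewrite divr_gt0 //; lra.
have [|Hs HY [H0 H_min]] := @min_subgroup_optimal lam; first by rewrite lam_gt0 mu_lam; nra.
exists (min_subgroup lam); split=> //; split=> // A A0; rewrite /cY !mul0r !subr0 ler_nat.
apply: leq_trans (card_actset_ge_nonempty Hact Y A0).
have := H_min _ (fset1_neq0 1%g); have := mu_le H0.
rewrite /cY actset1 // cardfs1 mulr1 -/k -ltnS -(ltr_nat R) -addn1 natrD -/k.
set n := #|` min_subgroup lam|%:R; have n_ge0 : 0 <= n by rewrite ler0n.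
rewrite mu_lam; nra.
Qed.

Definition lam_seq n : R := mu - mu / n.+2%:R.

Lemma lam_seq_bounds n : 0 < mu -> 0 < lam_seq n < mu.
Proof.
move=> mu_gt0; rewrite /lam_seq subr_gt0 ltrBlDr ltrDl divr_gt0 // andbT.
by rewrite ltr_pdivrMr // ltr_pMr // ltr1n.
Qed.

Lemma lam_seq_nondecr : {homo lam_seq : m n / (m <= n)%N >-> m <= n}.
Proof.
move=> m n mn; rewrite /lam_seq lerD2l lerN2 ler_wpM2l ?mu_ge0 //.
by rewrite lef_pV2 ?posrE ?ltr0n // ler_nat.
Qed.

Lemma minimizer_of_lam_seq K N : (forall n, (N <= n)%N -> minimizer (lam_seq n) K) ->
  minimizer mu K.
Proof.
move=> K_min; have [K0 _] := K_min N (leqnn N); split=> // A A0.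
apply/ler_addgt0Pr => e e_gt0; set a : R := #|` A|%:R.
pose n := (N + Num.Def.archi_bound (mu * a / e))%N.
have [_ /(_ A A0)] := K_min n (leq_addr _ _).
have a_ge0 : 0 <= a by rewrite ler0n.
have lt_n : mu * a / e < n.+2%:R.
  apply: lt_le_trans (archi_boundP _) _.
    by apply: divr_ge0; [apply: mulr_ge0; [apply: mu_ge0|] | apply: ltW].
  by rewrite ler_nat; do 2! apply: leqW; apply: leq_addl.
have : mu / n.+2%:R * a < e by rewrite mulrAC ltr_pdivrMr // [e * _]mulrC -ltr_pdivrMr.
have := mulr_ge0 (divr_ge0 mu_ge0 (ler0n R n.+2)) (ler0n R #|` K|).
rewrite /cY /lam_seq -/a; set t := mu / n.+2%:R; lra.
Qed.

End Cost.

Section ChainStabilization.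
Variables (G : groupType) (X : choiceType) (act : G -> X -> X).
Hypothesis Hact : is_action act.
Variables (Y : {fset X}) (R : realType) (mu : R) (H : nat -> {fset G}).
Hypothesis subH : forall n, is_subgroup (H n).
Hypothesis H_mono : {homo H : m n / (m <= n)%N >-> m `<=` n}.
Hypothesis mu_le : forall n, mu * #|` H n|%:R <= #|` actset act (H n) Y|%:R.
Hypothesis cY_lt : forall m n, (m <= n)%N -> H m != H n ->
  cY act Y mu (H n) < cY act Y mu (H m).

Local Notation d n := (cY act Y mu (H n)).

Lemma cY_nonincr m n : (m <= n)%N -> d n <= d m.
Proof. by move=> mn; have [->|/(cY_lt mn)/ltW] := eqVneq (H m) (H n). Qed.

Lemma eventually_card_actset_orbits : exists2 T, T `<=` Y &
  \forall n \near eventually,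
    #|` actset act (H n) Y| = (\sum_(t <- T) #|` actorbit act (H n) t|)%N.
Proof.
(* A smallest [T] whose orbits cover [Y] keeps covering as [H n] grows, and by
   minimality its points lie in distinct orbits. *)
pose covers n T := T `<=` Y /\ Y `<=` actset act (H n) T.
have : exists k, `[< exists n T, covers n T /\ #|` T| = k >].
  exists #|` Y|; apply/asboolP; exists 0%N, Y; split=> //; split=> //.
  apply/fsubsetP => y yY; rewrite -(act1 Hact y); apply: in_imfset2 => //.
  by case: (subH 0).
case/ex_minnP => _ /asboolP[n1 [T [[TY YT] <-]]] T_min.
exists T => //; exists n1 => // n n1n.
have YTn : Y `<=` actset act (H n) T.
  by apply: fsubset_trans YT _; apply: actsetS; apply: H_mono.
apply: card_actset_mincover => // T' T'T YT'.
by apply: T_min; apply/asboolP; exists n, T'; split=> //; split=> //; apply: fsubset_trans T'T TY.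
Qed.

Section Unbounded.
Hypothesis card_unbounded : forall K, \forall n \near eventually, (K < #|` H n|)%N.
Variable T : {fset X}.
Hypothesis TY : T `<=` Y.
Hypothesis cardHY_orbits : \forall n \near eventually,
  #|` actset act (H n) Y| = (\sum_(t <- T) #|` actorbit act (H n) t|)%N.

(* Points whose stabilizer size is eventually constant contribute
   [|H n| / lim_s t] each to [|H n.Y|]; the others contribute [p n = o(|H n|)]. *)
Let s t n := #|` actstab act (H n) t|.
Let bounded t := `[< exists m, \forall n \near eventually, s t n = m >].
Let lim_s t := xget 0%N (fun m => \forall n \near eventually, s t n = m).
Let beta : R := \sum_(t <- [fset t in T | bounded t]) (lim_s t)%:R^-1.
Let p n := (\sum_(t <- [fset t in T | ~~ bounded t]) #|` actorbit act (H n) t|)%N.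

Let s_nondecr t : {homo s t : m n / (m <= n)%N}.
Proof. by move=> m n mn; apply/fsubset_leq_card/actstabS/H_mono. Qed.

Let unbounded_s t : ~~ bounded t -> forall M, \forall n \near eventually, (M < s t n)%N.
Proof.
move/asboolPn => t_unb; have [[m]|//] := nondecreasing_nat_dichotomy (s_nondecr t).
by move=> sm; case: t_unb; exists m.
Qed.

Lemma eventually_card_actset :
  \forall n \near eventually, #|` actset act (H n) Y|%:R = #|` H n|%:R * beta + (p n)%:R.
Proof.
have lim_sE : \forall n \near eventually,
    forall t, t \in [fset t in T | bounded t] -> s t n = lim_s t.
  apply: near_forall_fset => t.
  by rewrite !inE /= => /andP[_ /asboolP]; apply: xgetPex.
apply: filterS2 cardHY_orbits lim_sE => n -> sn.
rewrite (big_fsetID _ bounded) natrD natr_sum /beta mulr_sumr; congr (_ + _).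
apply: eq_big_seq => t tB; have := orbit_stabilizer Hact (subH n) t.
rewrite -/(s t n) sn // => /(congr1 (fun k => k%:R : R)); rewrite natrM => <-.
by rewrite mulfK // pnatr_eq0 -lt0n -(sn _ tB) card_actstab_gt0.
Qed.

Lemma beta_le_mu : beta <= mu.
Proof.
rewrite leNgt; apply/negP => mu_lt_beta; have gap : 0 < beta - mu by rewrite subr_gt0.
have d0_ge0 : 0 <= d 0 by rewrite /cY subr_ge0; apply: mu_le.
pose K := Num.Def.archi_bound (d 0 / (beta - mu)).
have [n [cardE Kn]] := filter_ex (filterI eventually_card_actset (card_unbounded K)).
have : d 0 < K%:R * (beta - mu).
  by rewrite -ltr_pdivrMr //; apply: archi_boundP; rewrite divr_ge0 // ltW.
have : K%:R * (beta - mu) <= #|` H n|%:R * (beta - mu) by rewrite ler_pM2r // ler_nat ltnW.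
have := cY_nonincr (leq0n n); rewrite {1}/cY cardE.
have := ler0n R (p n); lra.
Qed.

Lemma mu_le_beta : mu <= beta.
Proof.
rewrite leNgt; apply/negP => beta_lt_mu; have gap : 0 < mu - beta by rewrite subr_gt0.
pose M := Num.Def.archi_bound (#|` Y|%:R / (mu - beta)).
have p_bound : \forall n \near eventually, (p n * M.+1 <= #|` Y| * #|` H n|)%N.
  have : \forall n \near eventually, forall t, t \in [fset t in T | ~~ bounded t] -> (M < s t n)%N.
    by apply: near_forall_fset => t; rewrite !inE /= => /andP[_ /unbounded_s].
  apply: filterS => n sM; rewrite /p big_distrl /=.
  apply: (@leq_trans (\sum_(t <- [fset t in T | ~~ bounded t]) #|` H n|)).
    rewrite !big_seq; apply: leq_sum => t tU.
    by rewrite -(orbit_stabilizer Hact (subH n) t) leq_mul2l sM ?orbT.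
  rewrite big_const_seq count_predT iter_addn_0 mulnC leq_mul2r; apply/orP; right.
  by apply/fsubset_leq_card/(fsubset_trans _ TY)/fsubsetP => t; rewrite !inE /= => /andP[].
have [n [cardE pM]] := filter_ex (filterI eventually_card_actset p_bound).
have : 0 < #|` H n|%:R :> R by rewrite ltr0n cardfs_gt0; apply/fset0Pn; exists 1%g; case: (subH n).
have := mu_le n; rewrite cardE; move: pM; rewrite -(ler_nat R) !natrM -addn1 natrD.
have : #|` Y|%:R < M%:R * (mu - beta).
  by rewrite -ltr_pdivrMr //; apply: archi_boundP; rewrite divr_ge0 // ltW.
set h := #|` H n|%:R; set y := #|` Y|%:R; set m := M%:R; set q := (p n)%:R.
move=> yM qM muh h_gt0; have m_ge0 : 0 <= m by rewrite ler0n.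
have : (mu - beta) * h * (m + 1) <= q * (m + 1) by rewrite ler_wpM2r ?addr_ge0 //; lra.
have : y * h < m * (mu - beta) * h by rewrite ltr_pM2r.
nra.
Qed.

Lemma eventually_cY_nat : \forall n \near eventually, d n = (p n)%:R.
Proof.
have beta_mu : beta = mu by apply/eqP; rewrite eq_le beta_le_mu mu_le_beta.
by apply: filterS eventually_card_actset => n cardE; rewrite /cY cardE beta_mu; lra.
Qed.

Lemma unbounded_chain_stabilizes : exists N, forall n, (N <= n)%N -> H n = H N.
Proof.
have [N0 _ dE] := eventually_cY_nat.
apply: (@eventually_const_of_potential _ _ p N0) => m n /andP[N0m mn] Hmn.
by rewrite -(ltr_nat R) -(dE m N0m) -(dE n (leq_trans N0m mn)); apply: cY_lt.
Qed.

End Unbounded.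

Lemma chain_stabilizes : exists N, forall n, (N <= n)%N -> H n = H N.
Proof.
have card_nondecr : {homo (fun n => #|` H n|) : m n / (m <= n)%N}.
  by move=> m n mn; apply/fsubset_leq_card/H_mono.
case: (nondecreasing_nat_dichotomy card_nondecr) => [[k [N _ Nk]]|card_unb].
  exists N => n Nn; apply/eqP; rewrite eq_sym eqEfcard H_mono //=.
  by rewrite (Nk n Nn) (Nk N (leqnn N)).
have [T TY HT] := eventually_card_actset_orbits.
exact: (unbounded_chain_stabilizes card_unb TY HT).
Qed.

End ChainStabilization.

Section Optimal.
Variables (G : groupType) (X : choiceType) (act : G -> X -> X).
Hypothesis Hact : is_action act.
Variables (Y : {fset X}) (R : realType).

Local Notation mu := (mu R act Y).

Lemma exists_optimal_subgroup_mu : 0 < mu -> exists H, optimal_subgroup act Y mu H.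
Proof.
move=> mu_gt0; pose lam := lam_seq act Y R; pose H n := min_subgroup act Y (lam n).
have lam_ok n : 0 < lam n < mu := lam_seq_bounds n mu_gt0.
have H_opt n : optimal_subgroup act Y (lam n) (H n) by apply: min_subgroup_optimal.
have H_mono : {homo H : m n / (m <= n)%N >-> m `<=` n}.
  move=> m n mn; apply: min_subgroup_mono => //; first by case/andP: (lam_ok m) => /ltW.
  by rewrite lam_seq_nondecr //; case/andP: (lam_ok n).
have [|//|n|m n mn Hmn|N HN] := @chain_stabilizes _ _ act Hact Y R mu H.
- by move=> n; case: (H_opt n).
- by apply: mu_le; case: (H_opt n) => _ _ [].
- have [_ _ [Hm0 _]] := H_opt m; have [_ _ HnM] := H_opt n.
  apply: minimizer_cY_mu_lt HnM Hm0 _; first by case/andP: (lam_ok n).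
  by apply: fproper_ltn_card; rewrite fproperEneq Hmn H_mono.
exists (H N); have [Hs HY _] := H_opt N; split=> //.
by apply: (minimizer_of_lam_seq (N := N)) => n Nn; rewrite -(HN n Nn); case: (H_opt n).
Qed.

Lemma exists_optimal_subgroup lam :
  0 < mu -> 0 <= lam <= mu -> exists H, optimal_subgroup act Y lam H.
Proof.
move=> mu_gt0; rewrite le_eqVlt => /andP[/predU1P[<-|lam_gt0]].
  by move=> _; apply: exists_optimal_subgroup0.
rewrite le_eqVlt => /predU1P[->|lam_lt]; first exact: exists_optimal_subgroup_mu.
by exists (min_subgroup act Y lam); apply: min_subgroup_optimal => //; apply/andP.
Qed.

End Optimal.

Theorem mainTheorem8 (G : groupType) (X : choiceType) (act : G -> X -> X)
  (Hact : is_action act) (Y : {fset X}) (R : realType) :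
  mu R act Y = 0 \/
  forall lam : R, 0 <= lam <= mu R act Y ->
    exists H : {fset G},
      is_subgroup H /\
      (forall g : G, in_stab act Y g -> g \in H) /\
      (forall A : {fset G}, A != fset0 ->
         cY act Y lam H <= cY act Y lam A /\
         #|` Y|%:R - lam * #|` H|%:R <= cY act Y lam H).
Proof.
have [->|mu_neq0] := eqVneq (mu R act Y) 0; [by left | right => lam lam_ok].
have mu_gt0 : 0 < mu R act Y by rewrite lt_neqAle eq_sym mu_neq0 mu_ge0.
have [H [Hs HY [_ H_min]]] := exists_optimal_subgroup Hact mu_gt0 lam_ok.
exists H; split=> //; split=> // A A0; split; first exact: H_min.
by rewrite lerD2r ler_nat card_actset_ge //; case: Hs.
Qed.
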